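(* Let $p$ be a prime, $k>0$ an integer, and $G_{p,k}=C_{p^\infty}\times C_k\times\mathbf{T}$. For a finite subgroup $F$ of $C_k\times\mathbf{T}$ and a homomorphism $f:C_{p^\infty}\to(C_k\times\mathbf{T})/F$, set $H_{F,f}:=q_F^{-1}(\mathrm{Graph}(f))$. Then $H_{F,f}$ is an infinite discrete subgroup of $G_{p,k}$, and every infinite discrete subgroup of $G_{p,k}$ is of the form $H_{F,f}$ for some such $F$ and $f$.
   Context: $\mathbf{T}$ is the circle group; $C_m\subset\mathbf{T}$ is the group of $m$-th roots of unity; $C_{p^\infty}=\bigcup_{\ell\ge1}C_{p^\ell}$ is the Prüfer $p$-group, with the discrete topology. $q_F:G_{p,k}\to G_{p,k}/(\{1\}\times F)=C_{p^\infty}\times(C_k\times\mathbf{T})/F$ is the quotient map, and $\mathrm{Graph}(f)=\{(w,f(w)):w\in C_{p^\infty}\}$. *)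

From HB Require Import structures.
From mathcomp Require Import all_boot all_order all_algebra.
From mathcomp Require Import complex.
From mathcomp Require Import boolp classical_sets cardinality reals.
Set Implicit Arguments. Unset Strict Implicit. Unset Printing Implicit Defensive.
Import Order.TTheory GRing.Theory Num.Theory.
Local Open Scope ring_scope.
Local Open Scope classical_set_scope.
Local Open Scope complex_scope.

Section Defs.
Variable R : realType.
Notation C := (R[i]).

Definition circle : set C := [set z | `|z| = 1].
Definition roots_unity (m : nat) : set C := [set z | z ^+ m = 1].
Definition pruefer (p : nat) : set C :=
  [set z | exists l : nat, (0 < l)%N /\ z ^+ (p ^ l) = 1].

Definition CkT (k : nat) : set (C * C) := roots_unity k `*` circle.
Definition Gpk (p k : nat) : set (C * (C * C)) := pruefer p `*` CkT k.

Definition one2 : C * C := (1, 1).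
Definition mul2 (x y : C * C) : C * C := (x.1 * y.1, x.2 * y.2).
Definition inv2 (x : C * C) : C * C := (x.1^-1, x.2^-1).
Definition one3 : C * (C * C) := (1, one2).
Definition mul3 (x y : C * (C * C)) : C * (C * C) := (x.1 * y.1, mul2 x.2 y.2).
Definition inv3 (x : C * (C * C)) : C * (C * C) := (x.1^-1, inv2 x.2).

Definition is_subgroup {T : Type} (one : T) (mul : T -> T -> T) (inv : T -> T)
    (S A : set T) : Prop :=
  A `<=` S /\ A one /\ (forall x y, A x -> A y -> A (mul x y)) /\
  (forall x, A x -> A (inv x)).

Definition coset (F : set (C * C)) (x : C * C) : set (C * C) :=
  [set mul2 x y | y in F].

(* f : C_{p^oo} -> (C_k x T)/F is a group homomorphism; elements of the
   quotient are represented as cosets (subsets of C_k x T), and the product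
   of cosets is the set-theoretic product. *)
Definition is_hom_quot (p k : nat) (F : set (C * C)) (f : C -> set (C * C)) : Prop :=
  (forall w, pruefer p w -> exists x, CkT k x /\ f w = coset F x) /\
  (forall w w', pruefer p w -> pruefer p w' ->
     f (w * w') = [set z | exists a b, f w a /\ f w' b /\ z = mul2 a b]).

(* H_{F,f} = q_F^{-1}(Graph f), where q_F(w,x) = (w, xF) *)
Definition HFf (p k : nat) (F : set (C * C)) (f : C -> set (C * C)) : set (C * (C * C)) :=
  [set h | pruefer p h.1 /\ CkT k h.2 /\ coset F h.2 = f h.1].

(* H is a discrete subset of G_{p,k}: the topology on G_{p,k} is the product
   of the discrete topology on C_{p^oo} and the subspace topologies from C on
   C_k and T; so H is discrete iff each h in H has a basic neighbourhood
   meeting H only in h. *)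
Definition discrete_in_G (H : set (C * (C * C))) : Prop :=
  forall h, H h -> exists e : R, 0 < e /\
    forall h', H h' -> h'.1 = h.1 ->
      `|h'.2.1 - h.2.1| < e%:C -> `|h'.2.2 - h.2.2| < e%:C -> h' = h.

End Defs.

From HB Require Import structures.
From mathcomp Require Import all_boot all_order all_algebra.
From mathcomp Require Import complex.
From mathcomp Require Import boolp classical_sets cardinality reals.
From mathcomp Require Import ring lra finmap.
Set Implicit Arguments. Unset Strict Implicit. Unset Printing Implicit Defensive.
Import Order.TTheory GRing.Theory Num.Theory.
Local Open Scope ring_scope.
Local Open Scope classical_set_scope.
Local Open Scope complex_scope.

(* Discreteness makes the fibre F of H over 1 a finite subgroup of C_k x T, because
   a uniformly discrete subset of the compact set C_k x T is finite, and every fibre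
   of H is a coset of F; so H = H_{F,f} where f sends w to the fibre over w. That f is
   defined on all of C_{p^oo} comes from infiniteness: if the first coordinates of H
   all lay in some C_{p^l}, H would be finite; otherwise H contains a point (u, x)
   with u of order p^j > p^l, and the powers of u exhaust C_{p^l}. Conversely,
   H_{F,f} projects onto the infinite group C_{p^oo}, and it is discrete because two
   of its points in the same fibre differ by an element of the finite group F. *)

Lemma prime_power_root_is_power (F : fieldType) (p m l : nat) (u w : F) :
  prime p -> u ^+ (p ^ m) = 1 -> u ^+ (p ^ l) != 1 -> w ^+ (p ^ l) = 1 ->
  exists i, w = u ^+ i.
Proof.
move=> pp um ul wl.
have pm_gt0 : (0 < p ^ m)%N by rewrite expn_gt0 prime_gt0.
have [d u_prim /(dvdn_pfactor _ _ pp)[j _ dE]] := prim_order_exists pm_gt0 um.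
have lj : (l <= j)%N.
  rewrite leqNgt; apply: contra ul => jl.
  by rewrite -(prim_order_dvd u_prim) dE dvdn_exp2l // ltnW.
have wd : w ^+ d = 1.
  by rewrite dE -(subnK lj) expnD mulnC exprM wl expr1n.
by have [i ->] := prim_rootP u_prim wd; exists i.
Qed.

Lemma finite_lower_bound (R : realDomainType) (T : eqType) (S : set T) (phi : T -> R) :
  finite_set S -> (forall y, S y -> 0 < phi y) ->
  exists2 e, 0 < e & forall y, S y -> e <= phi y.
Proof.
case/finite_seqP => s ->; elim: s => [|a s IH] phi_gt0; first by exists 1.
have [|e e_gt0 e_le] := IH; first by move=> y ys; apply: phi_gt0; rewrite /= inE ys orbT.
have phia_gt0 : 0 < phi a by apply: phi_gt0; rewrite /= inE eqxx.
exists (Order.min (phi a) e); first by rewrite lt_min phia_gt0.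
by move=> y /=; rewrite inE => /orP[/eqP ->|ys]; rewrite ge_min ?lexx // e_le ?orbT.
Qed.

Section UnitCircle.
Variable R : realType.
Local Notation C := R[i].

Lemma norm_unity_root (n : nat) (z : C) : (0 < n)%N -> z ^+ n = 1 -> `|z| = 1.
Proof.
move=> n_gt0 /(congr1 Num.norm); rewrite normrX normr1 => /eqP.
by rewrite pexpr_eq1 // => /eqP.
Qed.

Lemma norm_eq1_neq0 (z : C) : `|z| = 1 -> z != 0.
Proof. by move=> z1; rewrite -normr_gt0 z1. Qed.

Lemma finite_unity_roots (n : nat) : (0 < n)%N -> finite_set [set z : C | z ^+ n = 1].
Proof.
move=> n_gt0; apply: contrapT => /infinite_set_fsetP/(_ n.+1)[B B_roots].
apply/negP; rewrite -ltnNge.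
apply: leq_ltn_trans (max_unity_roots n_gt0 _ (fset_uniq B)) _ => //.
by apply/allP => x xB; apply/unity_rootP; exact: B_roots.
Qed.

(* A root of 1 + X + ... + X^(p-1) is a p-th root of unity, and is not 1 as p != 0 in C. *)
Lemma nontrivial_prime_root (p : nat) : prime p -> exists2 z : C, z ^+ p = 1 & z != 1.
Proof.
move=> pp; have p_gt1 := prime_gt1 pp.
have : size (\poly_(i < p) (1 : C)) != 1%N.
  by rewrite size_poly_eq ?oner_eq0 // neq_ltn p_gt1 orbT.
move/closed_rootP => [z]; rewrite /root horner_poly => /eqP.
under eq_bigr do rewrite mul1r; move=> sum_z.
exists z; first by apply/eqP; rewrite -subr_eq0 subrX1 sum_z mulr0.
apply/eqP => z1; move: sum_z; rewrite z1; under eq_bigr do rewrite expr1n.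
by rewrite sumr_const card_ord => /eqP; rewrite pnatr_eq0 gtn_eqF ?prime_gt0.
Qed.

Lemma pruefer_infinite (p : nat) : prime p -> infinite_set (@pruefer R p).
Proof.
move=> pp; have [zeta zeta_p zeta_neq1] := nontrivial_prime_root pp.
pose fix zs (l : nat) : C := if l is l'.+1 then p.-root (zs l') else zeta.
have zsE l : zs l ^+ (p ^ l) = zeta.
  elim: l => [|l IH] /=; first by rewrite expr1.
  by rewrite expnS exprM rootCK ?prime_gt0.
have zs_root l : zs l ^+ (p ^ l.+1) = 1 by rewrite expnSr exprM zsE.
have zs_inj : injective zs.
  suff lt_neq a b : (a < b)%N -> zs a != zs b.
    by move=> a b eab; case: (ltngtP a b) => // /lt_neq; rewrite eab eqxx.
  move=> ab; apply: contraNneq zeta_neq1 => eab.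
  have /dvdnP[c pbE] : (p ^ a.+1 %| p ^ b)%N by rewrite dvdn_Pexp2l // prime_gt1.
  by rewrite -(zsE b) pbE mulnC exprM -eab zs_root expr1n.
move=> fin; apply: infinite_nat.
have : finite_set (zs @` [set: nat]).
  by apply: sub_finite_set fin => _ [l _ <-]; exists l.+1.
by rewrite (eq_finite_set (inj_card_eq _)) // => a b _ _ /zs_inj.
Qed.

Lemma pruefer_neq0 (p : nat) (w : C) : prime p -> pruefer p w -> w != 0.
Proof.
move=> pp [l [_ wl]]; apply: contra_eq_neq wl => ->.
by rewrite expr0n gtn_eqF ?expn_gt0 ?prime_gt0 // mulr0n eq_sym oner_eq0.
Qed.

Lemma pruefer1 (p : nat) : pruefer p (1 : C).
Proof. by exists 1%N; rewrite expr1n. Qed.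

Lemma prueferM (p : nat) (w w' : C) : pruefer p w -> pruefer p w' -> pruefer p (w * w').
Proof.
move=> [l [l_gt0 wl]] [l' [_ wl']]; exists (l + l')%N.
split; first by rewrite addn_gt0 l_gt0.
by rewrite exprMn expnD exprM wl expr1n mulnC exprM wl' expr1n mulr1.
Qed.

Lemma prueferV (p : nat) (w : C) : pruefer p w -> pruefer p w^-1.
Proof. by move=> [l [l_gt0 wl]]; exists l; rewrite exprVn wl invr1. Qed.

Lemma norm_mulVB1 (a b : C) : `|a| = 1 -> `|a^-1 * b - 1| = `|b - a|.
Proof.
move=> a1; rewrite -(mulVf (norm_eq1_neq0 a1)) -mulrBr normrM normfV a1.
by rewrite invr1 mul1r.
Qed.

End UnitCircle.

Section UnitDisk.
Variable R : realType.
Local Notation C := R[i].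

Lemma norm_i : `|'i%C| = 1 :> C.
Proof. exact: normCi. Qed.

Lemma normc_ge_Im (z : C) : `|complex.Im z|%:C <= `|z|.
Proof.
rewrite -normrN -ReiNIm (le_trans (normc_ge_Re _)) //.
by rewrite normrM norm_i mulr1.
Qed.

Lemma norm_Re_le1 (z : C) : `|z| <= 1 -> `|complex.Re z| <= 1.
Proof. by move=> z_le1; rewrite -lecR (le_trans (normc_ge_Re z)). Qed.

Lemma norm_Im_le1 (z : C) : `|z| <= 1 -> `|complex.Im z| <= 1.
Proof. by move=> z_le1; rewrite -lecR (le_trans (normc_ge_Im z)). Qed.

Lemma norm_le_Re_Im (z : C) : `|z| <= (`|complex.Re z| + `|complex.Im z|)%:C.
Proof.
rewrite {1}[z]complexE rmorphD /= (le_trans (ler_normD _ _)) //.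
rewrite normrM norm_i mul1r.
by rewrite !normc_def /= !expr0n !addr0 !sqrtr_sqr.
Qed.

Definition grid_cell (d t : R) : nat := Num.truncn ((t + 1) / d).

Lemma grid_cell_lt (d t : R) : 0 < d -> `|t| <= 1 ->
  (grid_cell d t < (Num.truncn (2 / d)).+1)%N.
Proof.
move=> d_gt0; rewrite ler_norml ltnS => /andP[_ t_le1]; apply: le_truncn.
by rewrite ler_pM2r ?invr_gt0 //; lra.
Qed.

Lemma grid_cell_close (d s t : R) : 0 < d -> `|s| <= 1 -> `|t| <= 1 ->
  grid_cell d s = grid_cell d t -> `|s - t| < d.
Proof.
move=> d_gt0; rewrite !ler_norml => /andP[s_ge _] /andP[t_ge _].
have: 0 <= (s + 1) / d by apply: divr_ge0; lra.
have: 0 <= (t + 1) / d by apply: divr_ge0; lra.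
move=> /truncn_itv/andP[tl tr] /truncn_itv/andP[sl sr] eq_cell.
move: sl sr; rewrite /grid_cell in eq_cell *; rewrite eq_cell -!natr1 => sl sr.
move: tr; rewrite -natr1 => tr.
have -> : s - t = ((s + 1) / d - (t + 1) / d) * d by field; rewrite lt0r_neq0.
rewrite normrM (gtr0_norm d_gt0) gtr_pMl // ltr_norml.
by apply/andP; split; lra.
Qed.

Definition grid_cells (d : R) (z : C) : nat * nat :=
  (grid_cell d (complex.Re z), grid_cell d (complex.Im z)).

Lemma grid_cells_close (d : R) (z w : C) : 0 < d -> `|z| <= 1 -> `|w| <= 1 ->
  grid_cells d z = grid_cells d w -> `|z - w| < (d + d)%:C.
Proof.
move=> d_gt0 z_le1 w_le1 [eq_Re eq_Im].
apply: le_lt_trans (norm_le_Re_Im _) _; rewrite ltcR !raddfB /=.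
by apply: ltrD; apply: grid_cell_close; rewrite ?norm_Re_le1 ?norm_Im_le1.
Qed.

Lemma separated_finite (S : set (C * C)) (e : R) : 0 < e ->
  (forall x, S x -> `|x.1| <= 1 /\ `|x.2| <= 1) ->
  (forall x y, S x -> S y -> `|x.1 - y.1| < e%:C -> `|x.2 - y.2| < e%:C -> x = y) ->
  finite_set S.
Proof.
move=> e_gt0 S_disk S_sep; pose d := e / 2.
have d_gt0 : 0 < d by rewrite divr_gt0.
have dde : d + d = e by rewrite /d; field.
pose g x := (grid_cells d x.1, grid_cells d x.2).
have g_inj : {in S &, injective g}.
  move=> x y /[!in_setE] Sx Sy gxy.
  have [[x1 x2] [y1 y2]] := (S_disk x Sx, S_disk y Sy).
  have [eq1 eq2] := (congr1 fst gxy, congr1 snd gxy).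
  by apply: S_sep; rewrite // -dde grid_cells_close.
pose N := (Num.truncn (2 / d)).+1.
rewrite -(eq_finite_set (inj_card_eq g_inj)).
apply: (@sub_finite_set _ _ ((`I_N `*` `I_N) `*` (`I_N `*` `I_N))).
  move=> _ [x Sx <-]; have [x1 x2] := S_disk x Sx.
  by do 2 split; apply: grid_cell_lt; rewrite ?norm_Re_le1 ?norm_Im_le1.
by do 2 apply: finite_setX; apply: finite_II.
Qed.

Lemma finite_isolated1 (S : set (C * C)) : finite_set S ->
  exists2 e, 0 < e &
    forall y, S y -> `|y.1 - 1| < e%:C -> `|y.2 - 1| < e%:C -> y = (1, 1).
Proof.
move=> finS; have normcE (z : C) : `|z| = (Normc.normc z)%:C by case: z.
have normc_gt0 (z : C) : z != 0 -> 0 < Normc.normc z.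
  by rewrite -ltcR -normcE normr_gt0.
pose dist1 (y : C * C) := Order.max (Normc.normc (y.1 - 1)) (Normc.normc (y.2 - 1)).
have [|e e_gt0 e_le] :=
  finite_lower_bound (phi := dist1) (@finite_setD _ S [set (1, 1)] finS).
  move=> [y1 y2] [_ y_neq1]; rewrite /dist1 /= lt_max.
  have [y1E|y1_neq1] := eqVneq y1 1; last by rewrite normc_gt0 ?subr_eq0.
  have [y2E|y2_neq1] := eqVneq y2 1; last by rewrite orbC normc_gt0 ?subr_eq0.
  by exfalso; apply: y_neq1; rewrite y1E y2E.
exists e => // y Sy; rewrite !normcE !ltcR => y1_lt y2_lt.
apply: contrapT => y_neq1; have := e_le y (conj Sy y_neq1).
by rewrite /dist1 le_max !leNgt y1_lt y2_lt.
Qed.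

End UnitDisk.

Section ProductGroup.
Variables (R : realType) (k : nat).
Hypothesis k_gt0 : (0 < k)%N.
Local Notation C := R[i].
Implicit Types x y z : C * C.

Lemma mul2A x y z : mul2 x (mul2 y z) = mul2 (mul2 x y) z.
Proof. by rewrite /mul2 /= !mulrA. Qed.

Lemma mul2C x y : mul2 x y = mul2 y x.
Proof. by rewrite /mul2 mulrC [x.2 * _]mulrC. Qed.

Lemma mul12 x : mul2 (one2 R) x = x.
Proof. by case: x => a b; rewrite /mul2 /= !mul1r. Qed.

Lemma mul21 x : mul2 x (one2 R) = x.
Proof. by rewrite mul2C mul12. Qed.

Lemma inv2K x : inv2 (inv2 x) = x.
Proof. by case: x => a b; rewrite /inv2 /= !invrK. Qed.

Lemma CkT_norm x : CkT k x -> `|x.1| = 1 /\ `|x.2| = 1.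
Proof. by move=> [x1 x2]; split => //; apply: norm_unity_root x1. Qed.

Lemma mulV2 x : CkT k x -> mul2 (inv2 x) x = one2 R.
Proof.
move=> /CkT_norm[/norm_eq1_neq0 x1 /norm_eq1_neq0 x2].
by rewrite /mul2 /= !mulVf.
Qed.

Lemma mul2V x : CkT k x -> mul2 x (inv2 x) = one2 R.
Proof. by move=> Cx; rewrite mul2C mulV2. Qed.

Lemma mul2K x y : CkT k x -> mul2 (inv2 x) (mul2 x y) = y.
Proof. by move=> Cx; rewrite mul2A mulV2 // mul12. Qed.

Lemma mul2VK x y : CkT k x -> mul2 x (mul2 (inv2 x) y) = y.
Proof.
by move=> Cx; rewrite mul2A mul2V // mul12.
Qed.

Lemma CkT1 : CkT k (one2 R).
Proof. by split; rewrite /roots_unity /circle /= ?expr1n ?normr1. Qed.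

Lemma CkTM x y : CkT k x -> CkT k y -> CkT k (mul2 x y).
Proof.
move=> [x1 x2] [y1 y2]; split; rewrite /roots_unity /circle /=.
  by rewrite exprMn x1 y1 mulr1.
by rewrite normrM x2 y2 mulr1.
Qed.

Lemma CkTV x : CkT k x -> CkT k (inv2 x).
Proof.
move=> [x1 x2]; split; rewrite /roots_unity /circle /=.
  by rewrite exprVn x1 invr1.
by rewrite normfV x2 invr1.
Qed.

End ProductGroup.

Definition setmul2 (R : realType) (A B : set (R[i] * R[i])) : set (R[i] * R[i]) :=
  [set z | exists a b, A a /\ B b /\ z = mul2 a b].

Section Cosets.
Variables (R : realType) (k : nat) (F : set (R[i] * R[i])).
Hypothesis k_gt0 : (0 < k)%N.
Hypothesis F_subgroup : is_subgroup (one2 R) (@mul2 R) (@inv2 R) (CkT k) F.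
Implicit Types a b : R[i] * R[i].

Lemma coset_refl a : coset F a a.
Proof. by case: F_subgroup => _ [F1 _]; exists (one2 R); rewrite ?mul21. Qed.

Lemma coset1 : coset F (one2 R) = F.
Proof.
apply/seteqP; split => [_ [y Fy <-]|y Fy]; first by rewrite mul12.
by exists y; rewrite ?mul12.
Qed.

Lemma eq_coset a b : CkT k a -> CkT k b ->
  coset F a = coset F b <-> F (mul2 (inv2 a) b).
Proof.
have [FS [_ [FM FV]]] := F_subgroup; move=> Ca Cb; split => [eq_ab|Fab].
  have : coset F a b by rewrite eq_ab; apply: coset_refl.
  by case=> y Fy <-; rewrite (mul2K k_gt0).
have bE : b = mul2 a (mul2 (inv2 a) b) by rewrite (mul2VK k_gt0).
apply/seteqP; split => _ [y Fy <-].
  exists (mul2 (inv2 (mul2 (inv2 a) b)) y); first by apply: FM => //; apply: FV.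
  by rewrite {1}bE -mul2A (mul2VK k_gt0) //; apply: FS.
by exists (mul2 (mul2 (inv2 a) b) y); [apply: FM | rewrite mul2A -bE].
Qed.

Lemma coset_mem_eq a : F a -> coset F a = F.
Proof.
have [FS [_ [_ FV]]] := F_subgroup; move=> Fa.
rewrite -[in RHS]coset1; apply/(eq_coset (FS _ Fa) (CkT1 R k)).
by rewrite mul21; apply: FV.
Qed.

Lemma coset_mul a b : setmul2 (coset F a) (coset F b) = coset F (mul2 a b).
Proof.
have [_ [_ [FM _]]] := F_subgroup.
apply/seteqP; split => [_ [_ [_ [[y Fy <-] [[y' Fy' <-] ->]]]]|_ [y Fy <-]].
  exists (mul2 y y'); first exact: FM.
  by rewrite !mul2A; congr mul2; rewrite -!mul2A [mul2 y b]mul2C.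
exists (mul2 a y), b; split; first by exists y.
by split; [exact: coset_refl | rewrite -!mul2A [mul2 b y]mul2C].
Qed.

End Cosets.

Section GraphPreimage.
Variables (R : realType) (p k : nat).
Variables (F : set (R[i] * R[i])) (f : R[i] -> set (R[i] * R[i])).
Hypotheses (p_prime : prime p) (k_gt0 : (0 < k)%N).
Hypothesis F_subgroup : is_subgroup (one2 R) (@mul2 R) (@inv2 R) (CkT k) F.
Hypothesis f_hom : is_hom_quot p k F f.

Let f_coset : forall w, pruefer p w -> exists x, CkT k x /\ f w = coset F x := f_hom.1.

Let f_mul : forall w w', pruefer p w -> pruefer p w' ->
  f (w * w') = setmul2 (f w) (f w') := f_hom.2.

Lemma hom_quot1 : f 1 = F.
Proof.
have [x [Cx fx]] := f_coset (pruefer1 R p).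
have := f_mul (pruefer1 R p) (pruefer1 R p).
rewrite mulr1 fx (coset_mul F_subgroup).
move=> /(eq_coset k_gt0 F_subgroup Cx (CkTM Cx Cx)).
by rewrite (mul2K k_gt0) // => /(coset_mem_eq k_gt0 F_subgroup)->.
Qed.

Lemma hom_quotV w x : pruefer p w -> CkT k x -> coset F x = f w ->
  coset F (inv2 x) = f w^-1.
Proof.
move=> pw Cx fw; have [z [Cz fz]] := f_coset (prueferV pw).
have := f_mul pw (prueferV pw).
rewrite mulfV ?(pruefer_neq0 p_prime pw) // hom_quot1 -fw fz (coset_mul F_subgroup).
move=> Fxz.
apply/(eq_coset k_gt0 F_subgroup (CkTV Cx) Cz); rewrite inv2K.
by rewrite Fxz; apply: (coset_refl F_subgroup).
Qed.

Lemma HFf_subgroup :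
  is_subgroup (one3 R) (@mul3 R) (@inv3 R) (Gpk p k) (HFf p k F f).
Proof.
split; first by move=> h [ph [Ch _]].
split; first by split; [apply: pruefer1 | split; [apply: CkT1 | rewrite coset1 hom_quot1]].
split=> [h h' [ph [Ch eh]] [ph' [Ch' eh']]|h [ph [Ch eh]]].
  split; first exact: prueferM.
  by split; [apply: CkTM | rewrite /= f_mul // -eh -eh' (coset_mul F_subgroup)].
by split; [apply: prueferV | split; [apply: CkTV | apply: hom_quotV]].
Qed.

Lemma HFf_infinite : infinite_set (HFf p k F f).
Proof.
have pruefer_proj : pruefer p `<=` fst @` HFf p k F f.
  by move=> w pw; have [x [Cx fx]] := f_coset pw; exists (w, x).
move=> /(finite_image fst)/(sub_finite_set pruefer_proj).
exact: pruefer_infinite.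
Qed.

Lemma HFf_discrete : finite_set F -> discrete_in_G (HFf p k F f).
Proof.
move=> finF h [ph [Ch eh]]; have [e e_gt0 e_iso] := finite_isolated1 finF.
exists e; split => // h' [ph' [Ch' eh']] eq1 d1 d2.
have Fy : F (mul2 (inv2 h.2) h'.2).
  by apply/(eq_coset k_gt0 F_subgroup Ch Ch'); rewrite eh eh' eq1.
have [n1 n2] := CkT_norm k_gt0 Ch.
have := e_iso _ Fy; rewrite /= !norm_mulVB1 // => /(_ d1 d2) y1.
apply: injective_projections => //.
by rewrite -[h'.2](mul2VK k_gt0 h'.2 Ch) y1 mul21.
Qed.

End GraphPreimage.

Definition fibre (R : realType) (H : set (R[i] * (R[i] * R[i]))) (w : R[i]) :
  set (R[i] * R[i]) := [set x | H (w, x)].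

Section DiscreteSubgroups.
Variables (R : realType) (p k : nat) (H : set (R[i] * (R[i] * R[i]))).
Hypotheses (p_prime : prime p) (k_gt0 : (0 < k)%N).
Hypothesis H_subgroup : is_subgroup (one3 R) (@mul3 R) (@inv3 R) (Gpk p k) H.
Local Notation F := (fibre H 1).

Let H_pruefer h : H h -> pruefer p h.1.
Proof. by move/H_subgroup.1 => []. Qed.

Let H_CkT h : H h -> CkT k h.2.
Proof. by move/H_subgroup.1 => []. Qed.

Lemma fibre1_subgroup : is_subgroup (one2 R) (@mul2 R) (@inv2 R) (CkT k) F.
Proof.
have [_ [H1 [HM HV]]] := H_subgroup.
split; first by move=> x /H_CkT.
split; first exact: H1.
split=> [x y Fx Fy | x Fx]; first by have := HM _ _ Fx Fy; rewrite /mul3 /= mulr1.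
by have := HV _ Fx; rewrite /inv3 /= invr1.
Qed.

Lemma fibre_coset w a : H (w, a) -> fibre H w = coset F a.
Proof.
have [_ [_ [HM HV]]] := H_subgroup.
move=> Hwa; have w_neq0 := pruefer_neq0 p_prime (H_pruefer Hwa).
apply/seteqP; split => [x Hwx | _ [y Fy <-]].
  exists (mul2 (inv2 a) x); last by rewrite (mul2VK k_gt0 x (H_CkT Hwa)).
  by have := HM _ _ (HV _ Hwa) Hwx; rewrite /mul3 /inv3 /= mulVf.
by have := HM _ _ Hwa Fy; rewrite /mul3 /= mulr1.
Qed.

Lemma subgroup_expr u x n : H (u, x) -> H (u ^+ n, (x.1 ^+ n, x.2 ^+ n)).
Proof.
have [_ [H1 [HM _]]] := H_subgroup.
move=> Hux; elim: n => [|n IH]; first by rewrite !expr0; exact: H1.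
by have := HM _ _ Hux IH; rewrite /mul3 /mul2 /= -!exprS.
Qed.

Lemma discrete_fibre1_finite : discrete_in_G H -> finite_set F.
Proof.
have [_ [_ [FM FV]]] := fibre1_subgroup.
move=> H_discrete; have [e [e_gt0 e_iso]] := H_discrete (one3 R) H_subgroup.2.1.
apply: (separated_finite e_gt0); first by move=> x /H_CkT/(CkT_norm k_gt0)[-> ->].
move=> x y Fx Fy d1 d2; have Cy := H_CkT Fy; have [n1 n2] := CkT_norm k_gt0 Cy.
have yx : mul2 (inv2 y) x = one2 R.
  have := e_iso (1, mul2 (inv2 y) x) (FM _ _ (FV _ Fy) Fx) erefl.
  by rewrite /= !norm_mulVB1 // => /(_ d1 d2) /(congr1 snd).
by rewrite -(mul2VK k_gt0 x Cy) yx mul21.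
Qed.

(* If every first coordinate in H had order dividing p^l, H would lie in the
   finite set of pairs (w, g w * y) with w^(p^l) = 1 and y in F, g choosing a
   point in each fibre. *)
Lemma exists_pow_neq1 : infinite_set H -> finite_set F ->
  forall l, exists u x, H (u, x) /\ u ^+ (p ^ l) != 1.
Proof.
move=> H_infinite F_finite l; apply: contrapT => no_large; apply: H_infinite.
pose g w := xget (one2 R) (fibre H w).
apply: (@sub_finite_set _ _
  ((fun wy => (wy.1, mul2 (g wy.1) wy.2)) @` ([set z | z ^+ (p ^ l) = 1] `*` F))).
  move=> [w x] Hwx; have Hg : H (w, g w) by apply: (@xgetI _ _ (fibre H w) x).
  have : fibre H w x := Hwx.
  rewrite (fibre_coset Hg) => -[y Fy <-]; exists (w, y) => //; split => //=.
  by apply: contrapT => wl; apply: no_large; exists w, x; split => //; apply/eqP.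
apply/finite_image/finite_setX => //.
by apply: finite_unity_roots; rewrite expn_gt0 prime_gt0.
Qed.

Lemma fibre_neq0 w : infinite_set H -> finite_set F -> pruefer p w -> fibre H w !=set0.
Proof.
move=> H_infinite F_finite [l [_ wl]].
have [u [x [Hux ul]]] := exists_pow_neq1 H_infinite F_finite l.
have [m [_ um]] := H_pruefer Hux.
have [i ->] := prime_power_root_is_power p_prime um ul wl.
by eexists; apply: subgroup_expr Hux.
Qed.

Lemma fibre_hom_quot : (forall w, pruefer p w -> fibre H w !=set0) ->
  is_hom_quot p k F (fibre H).
Proof.
move=> onto; split=> [w /onto[x Hwx] | w w' /onto[a Ha] /onto[b Hb]].
  by exists x; split; [exact: H_CkT Hwx | exact: fibre_coset].
have [_ [_ [HM _]]] := H_subgroup.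
rewrite (fibre_coset (HM _ _ Ha Hb)) (fibre_coset Ha) (fibre_coset Hb).
by rewrite -(coset_mul fibre1_subgroup).
Qed.

Lemma HFf_fibre : H = HFf p k F (fibre H).
Proof.
apply/seteqP; split => [[w x] Hwx | [w x] [/= pw [Cx fibre_w]]].
  split; first exact: H_pruefer Hwx.
  by split; [exact: H_CkT Hwx | rewrite (fibre_coset Hwx)].
have : coset F x x by apply: (coset_refl fibre1_subgroup).
by rewrite fibre_w.
Qed.

End DiscreteSubgroups.

Theorem proposition6 (R : realType) (p k : nat) (hp : prime p) (hk : (0 < k)%N) :
  (forall (F : set (R[i] * R[i])) (f : R[i] -> set (R[i] * R[i])),
      is_subgroup (@one2 R) (@mul2 R) (@inv2 R) (@CkT R k) F ->
      finite_set F ->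
      is_hom_quot p k F f ->
      is_subgroup (@one3 R) (@mul3 R) (@inv3 R) (@Gpk R p k) (HFf p k F f) /\
      infinite_set (HFf p k F f) /\
      discrete_in_G (HFf p k F f)) /\
  (forall H : set (R[i] * (R[i] * R[i])),
      is_subgroup (@one3 R) (@mul3 R) (@inv3 R) (@Gpk R p k) H ->
      infinite_set H ->
      discrete_in_G H ->
      exists (F : set (R[i] * R[i])) (f : R[i] -> set (R[i] * R[i])),
        is_subgroup (@one2 R) (@mul2 R) (@inv2 R) (@CkT R k) F /\
        finite_set F /\
        is_hom_quot p k F f /\
        H = HFf p k F f).
Proof.
split=> [F f F_subgroup F_finite f_hom | H H_subgroup H_infinite H_discrete].
  split; first exact: HFf_subgroup.
  by split; [exact: HFf_infinite | exact: (HFf_discrete hk F_subgroup F_finite)].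
have F_finite := discrete_fibre1_finite hk H_subgroup H_discrete.
exists (fibre H 1), (fibre H); split; first exact: (fibre1_subgroup H_subgroup).
split=> //; split; last exact: (HFf_fibre hp hk H_subgroup).
apply: (fibre_hom_quot hp hk H_subgroup) => w.
exact: (fibre_neq0 hp hk H_subgroup H_infinite F_finite).
Qed.
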